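(* Let $H\subset K\subset G$ be compact Lie groups with Lie algebras $\mathfrak{h}\subset\mathfrak{k}\subset\mathfrak{g}$, let $g_0$ be a bi-invariant metric on $G$, let $\mathfrak{p}$ be the $g_0$-orthogonal complement of $\mathfrak{h}$ in $\mathfrak{g}$, $\mathfrak{m}$ the $g_0$-orthogonal complement of $\mathfrak{h}$ in $\mathfrak{k}$, and $\mathfrak{s}$ the $g_0$-orthogonal complement of $\mathfrak{k}$ in $\mathfrak{g}$. Suppose there exists $C>0$ such that for all $X,Y\in\mathfrak{p}$, $|X^{\mathfrak{m}}\wedge Y^{\mathfrak{m}}|\leq C\cdot|[X,Y]|$. Let $\Psi:\mathfrak{g}\to\mathfrak{g}$ be a $g_0$-self-adjoint, $\mathrm{Ad}_H$-equivariant endomorphism with $\Psi|_{\mathfrak{s}}=\Psi|_{\mathfrak{h}}=0$, and for $t$ with $I-t\Psi$ positive definite let $g_t$ be the left-invariant metric on $G$ given by $g_t(A,B)=g_0((I-t\Psi)^{-1}A,B)$ for $A,B\in\mathfrak{g}$. Then there exists $\epsilon>0$ such that for all $t\in[0,\epsilon)$, every plane spanned by two vectors of $\mathfrak{p}$ (as left-invariant vector fields, i.e. in $T_eG\cong\mathfrak{g}$) has nonnegative sectional curvature with respect to $g_t$.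
   Context: For a subspace $\mathfrak{v}\subset\mathfrak{g}$ and $A\in\mathfrak{g}$, $A^{\mathfrak{v}}$ denotes the $g_0$-orthogonal projection onto $\mathfrak{v}$; norms are with respect to $g_0$, and the norm on $\wedge^2\mathfrak{m}$ is induced by $g_0$. *)

From HB Require Import structures.
From mathcomp Require Import all_boot all_order all_algebra.
From mathcomp Require Import all_classical all_reals all_analysis.
Set Implicit Arguments. Unset Strict Implicit. Unset Printing Implicit Defensive.
Import Order.TTheory GRing.Theory Num.Theory.
Local Open Scope ring_scope.

(* The Lie algebra g is modelled as R^n (row vectors), with the bi-invariant
   metric g0 being the standard dot product (i.e. we work in a g0-orthonormal
   basis).  Linear endomorphisms act on the right: x |-> x *m M. *)

Definition dot {R : realType} {n : nat} (u v : 'rV[R]_n) : R := (u *m v^T) 0 0.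

Definition vnorm {R : realType} {n : nat} (u : 'rV[R]_n) : R := Num.sqrt (dot u u).

(* |a /\ b| for the norm on wedge^2 induced by g0 (Gram determinant). *)
Definition wedge_norm {R : realType} {n : nat} (a b : 'rV[R]_n) : R :=
  Num.sqrt (dot a a * dot b b - dot a b ^+ 2).

Definition is_lie_bracket {R : realType} {n : nat}
  (br : 'rV[R]_n -> 'rV[R]_n -> 'rV[R]_n) : Prop :=
  (forall (a : R) x y z, br (a *: x + y) z = a *: br x z + br y z) /\
  (forall x y, br x y = - br y x) /\
  (forall x y z, br x (br y z) + br y (br z x) + br z (br x y) = 0).

(* g0 is bi-invariant, i.e. ad-invariant on the Lie algebra *)
Definition ad_invariant {R : realType} {n : nat}
  (br : 'rV[R]_n -> 'rV[R]_n -> 'rV[R]_n) : Prop :=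
  forall x y z, dot (br x y) z = dot x (br y z).

Definition subalgebra {R : realType} {n : nat}
  (br : 'rV[R]_n -> 'rV[R]_n -> 'rV[R]_n) (V : 'M[R]_n) : Prop :=
  forall x y, (x <= V)%MS -> (y <= V)%MS -> (br x y <= V)%MS.

Definition orthsp {R : realType} {n : nat} (V : 'M[R]_n) (x : 'rV[R]_n) : Prop :=
  x *m V^T = 0.

Definition in_p {R : realType} {n : nat} (h : 'M[R]_n) (x : 'rV[R]_n) : Prop :=
  orthsp h x.
Definition in_m {R : realType} {n : nat} (h k : 'M[R]_n) (x : 'rV[R]_n) : Prop :=
  (x <= k)%MS /\ orthsp h x.
Definition in_s {R : realType} {n : nat} (k : 'M[R]_n) (x : 'rV[R]_n) : Prop :=
  orthsp k x.

Definition is_oproj {R : realType} {n : nat} (P : 'rV[R]_n -> Prop)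
  (x y : 'rV[R]_n) : Prop :=
  P y /\ forall z, P z -> dot (x - y) z = 0.

(* matrix of ad_Z : x |-> [Z, x]  (x *m adm br Z = br Z x for bilinear br) *)
Definition adm {R : realType} {n : nat}
  (br : 'rV[R]_n -> 'rV[R]_n -> 'rV[R]_n) (Z : 'rV[R]_n) : 'M[R]_n :=
  \matrix_(i, j) (br Z (delta_mx 0 i)) 0 j.

Definition posdef {R : realType} {n : nat} (M : 'M[R]_n) : Prop :=
  forall x : 'rV[R]_n, x != 0 -> 0 < (x *m M *m x^T) 0 0.

Definition ipQ {R : realType} {n : nat} (Q : 'M[R]_n) (u v : 'rV[R]_n) : R :=
  (u *m Q *m v^T) 0 0.

Definition gt_mx {R : realType} {n : nat} (Psi : 'M[R]_n) (t : R) : 'M[R]_n :=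
  invmx (1%:M - t *: Psi).

(* Levi-Civita connection on left-invariant fields (Koszul formula):
   2 Q(nabla_X Y, Z) = Q([X,Y],Z) - Q([Y,Z],X) + Q([Z,X],Y). *)
Definition levi_civita {R : realType} {n : nat} (Q : 'M[R]_n)
  (br : 'rV[R]_n -> 'rV[R]_n -> 'rV[R]_n) (X Y : 'rV[R]_n) : 'rV[R]_n :=
  (\row_j ((ipQ Q (br X Y) (delta_mx 0 j) - ipQ Q (br Y (delta_mx 0 j)) X
            + ipQ Q (br (delta_mx 0 j) X) Y) / 2)) *m invmx Q.

Definition curv {R : realType} {n : nat} (Q : 'M[R]_n)
  (br : 'rV[R]_n -> 'rV[R]_n -> 'rV[R]_n) (X Y Z : 'rV[R]_n) : 'rV[R]_n :=
  levi_civita Q br X (levi_civita Q br Y Z) - levi_civita Q br Y (levi_civita Q br X Z)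
  - levi_civita Q br (br X Y) Z.

Definition sec_curv {R : realType} {n : nat} (Q : 'M[R]_n)
  (br : 'rV[R]_n -> 'rV[R]_n -> 'rV[R]_n) (X Y : 'rV[R]_n) : R :=
  ipQ Q (curv Q br X Y Y) X / (ipQ Q X X * ipQ Q Y Y - ipQ Q X Y ^+ 2).

Definition mxT (R : realType) (n : nat) : normedModType R := 'M[R]_n.

(* AdH = Ad(H) subset of GL(g): a compact group of g0-orthogonal Lie algebra
   automorphisms preserving h and k, whose Lie algebra is ad(h). *)
Definition is_AdH {R : realType} {n : nat}
  (br : 'rV[R]_n -> 'rV[R]_n -> 'rV[R]_n) (h k : 'M[R]_n) (AdH : set 'M[R]_n) : Prop :=
  [/\ AdH 1%:M /\ (forall a b, AdH a -> AdH b -> AdH (a *m b)),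
      @compact (mxT R n) AdH,
      (forall a, AdH a ->
         [/\ a *m a^T = 1%:M,
             (forall x y, br (x *m a) (y *m a) = br x y *m a),
             (h *m a <= h)%MS & (k *m a <= k)%MS]),
      (forall Z, (Z <= h)%MS -> exists c : R -> 'M[R]_n,
         [/\ (forall s, AdH (c s)), c 0 = 1%:M, derivable c 0 1 & 'D_1 c 0 = adm br Z])
    & (forall c : R -> 'M[R]_n, (forall s, AdH (c s)) -> c 0 = 1%:M -> derivable c 0 1 ->
         exists2 Z, (Z <= h)%MS & 'D_1 c 0 = adm br Z)].

From HB Require Import structures.
From mathcomp Require Import all_boot all_order all_algebra.
From mathcomp Require Import all_classical all_reals all_analysis.
From mathcomp Require Import ring lra.
Import Order.TTheory GRing.Theory Num.Theory.
Local Open Scope ring_scope.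
Set Implicit Arguments. Unset Strict Implicit. Unset Printing Implicit Defensive.

(* With Q_t = (I - t Psi)^-1 the Gram matrix of g_t, write A = X Q_t and
   B = Y Q_t, so that X = A - t A Psi.  The Koszul formula turns the curvature
   numerator g_t(R(X,Y)Y, X) into 1/4 |[A,B]|^2 plus terms carrying a factor t.
   Because Psi vanishes on s and on h, these terms depend on A, B only modulo
   k^perp, i.e. through the k-components a, b, and the Psi-terms are controlled
   by |a /\ b|; the hypothesis |a /\ b| <= C |[A,B]| bounds all of them by
   t K |[A,B]|^2, which 1/4 |[A,B]|^2 dominates once t <= 1/(4K). *)

Section Dot.
Variables (R : realType) (n : nat).
Implicit Types (u v w : 'rV[R]_n) (M : 'M[R]_n).

Lemma dotE u v : dot u v = \sum_j u 0 j * v 0 j.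
Proof. by rewrite /dot mxE; apply: eq_bigr => j _; rewrite mxE. Qed.

Lemma dotC u v : dot u v = dot v u.
Proof. by rewrite !dotE; apply: eq_bigr => j _; rewrite mulrC. Qed.

Lemma dotDl u v w : dot (u + v) w = dot u w + dot v w.
Proof. by rewrite /dot mulmxDl mxE. Qed.

Lemma dotDr u v w : dot u (v + w) = dot u v + dot u w.
Proof. by rewrite dotC dotDl !(dotC u). Qed.

Lemma dotZl (a : R) u v : dot (a *: u) v = a * dot u v.
Proof. by rewrite /dot -scalemxAl mxE. Qed.

Lemma dotZr (a : R) u v : dot u (a *: v) = a * dot u v.
Proof. by rewrite dotC dotZl dotC. Qed.

Lemma dotNl u v : dot (- u) v = - dot u v.
Proof. by rewrite -scaleN1r dotZl mulN1r. Qed.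

Lemma dotNr u v : dot u (- v) = - dot u v.
Proof. by rewrite dotC dotNl dotC. Qed.

Lemma dotBl u v w : dot (u - v) w = dot u w - dot v w.
Proof. by rewrite dotDl dotNl. Qed.

Lemma dotBr u v w : dot u (v - w) = dot u v - dot u w.
Proof. by rewrite dotDr dotNr. Qed.

Lemma dot0l u : dot 0 u = 0.
Proof. by rewrite /dot mul0mx mxE. Qed.

Lemma dot0r u : dot u 0 = 0.
Proof. by rewrite dotC dot0l. Qed.

Lemma dotMl u v M : dot (u *m M) v = dot u (v *m M^T).
Proof. by rewrite /dot trmx_mul trmxK mulmxA. Qed.

Lemma dot_self_ge0 u : 0 <= dot u u.
Proof. by rewrite dotE; apply: sumr_ge0 => j _; rewrite -expr2 sqr_ge0. Qed.

Lemma dot_self_eq0 u : dot u u = 0 -> u = 0.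
Proof.
rewrite dotE => /eqP; rewrite psumr_eq0 => [/allP u0|j _]; last by rewrite -expr2 sqr_ge0.
apply/rowP => j; rewrite mxE.
by have := u0 j (mem_index_enum j); rewrite -expr2 sqrf_eq0 => /eqP.
Qed.

Lemma dot_delta j u : dot (delta_mx 0 j) u = u 0 j.
Proof.
rewrite dotE (bigD1 j) //= big1 => [|i /negPf ij]; rewrite !mxE ?eqxx ?ij /=.
  by rewrite mul1r addr0.
by rewrite mul0r.
Qed.

Lemma posdef_cauchy_schwarz M u v : M^T = M -> posdef M ->
  dot (u *m M) v ^+ 2 <= dot (u *m M) u * dot (v *m M) v.
Proof.
move=> MT Mpos.
have q_ge0 x : 0 <= dot (x *m M) x.
  have [->|x0] := eqVneq x 0; first by rewrite mul0mx dot0l.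
  exact/ltW/Mpos.
have qC x y : dot (x *m M) y = dot (y *m M) x by rewrite dotMl MT dotC.
have [->|v0] := eqVneq v 0; first by rewrite mul0mx !dot0l dot0r expr0n /= mulr0.
have vpos : 0 < dot (v *m M) v by exact: Mpos.
set s := dot (u *m M) v / dot (v *m M) v.
have := q_ge0 (u - s *: v).
rewrite mulmxBl -scalemxAl dotBl !dotBr !dotZl !dotZr (qC v u).
have sv : s * dot (v *m M) v = dot (u *m M) v by rewrite /s divfK // gt_eqF.
rewrite sv => q0.
have : 0 <= (dot (u *m M) u - s * dot (u *m M) v) * dot (v *m M) v.
  by apply: mulr_ge0; [lra | exact: ltW].
by rewrite mulrBl -mulrA (mulrC (dot _ v)) mulrA sv; lra.
Qed.

Lemma posdef1 : posdef (1%:M : 'M[R]_n).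
Proof.
move=> x x0; rewrite mulmx1 lt_def dot_self_ge0 andbT.
by move: x0; apply: contra => /eqP /dot_self_eq0 ->.
Qed.

Lemma dot_cauchy_schwarz u v : dot u v ^+ 2 <= dot u u * dot v v.
Proof. by have := posdef_cauchy_schwarz u v (trmx1 _ _) posdef1; rewrite !mulmx1. Qed.

Lemma vnorm_ge0 u : 0 <= vnorm u.
Proof. exact: sqrtr_ge0. Qed.

Lemma vnorm_sq u : vnorm u ^+ 2 = dot u u.
Proof. by rewrite sqr_sqrtr // dot_self_ge0. Qed.

Lemma vnorm0 : vnorm (0 : 'rV[R]_n) = 0.
Proof. by rewrite /vnorm dot0l sqrtr0. Qed.

Lemma normr_dot_le u v : `|dot u v| <= vnorm u * vnorm v.
Proof.
rewrite -sqrtrM ?dot_self_ge0 // -sqrtr_sqr ler_wsqrtr //.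
exact: dot_cauchy_schwarz.
Qed.

Lemma vnormZ (a : R) u : vnorm (a *: u) = `|a| * vnorm u.
Proof. by rewrite /vnorm dotZl dotZr mulrA -expr2 sqrtrM ?sqrtr_sqr // sqr_ge0. Qed.

Lemma vnormN u : vnorm (- u) = vnorm u.
Proof. by rewrite /vnorm dotNl dotNr opprK. Qed.

Lemma vnormD u v : vnorm (u + v) <= vnorm u + vnorm v.
Proof.
have uv0 : 0 <= vnorm u + vnorm v by rewrite addr_ge0 ?vnorm_ge0.
rewrite -(ger0_norm uv0) -sqrtr_sqr ler_wsqrtr //.
rewrite sqrrD !vnorm_sq dotDl !dotDr (dotC v u).
by have := normr_dot_le u v; have := ler_norm (dot u v); lra.
Qed.

Lemma vnormB u v : vnorm (u - v) <= vnorm u + vnorm v.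
Proof. by rewrite -(vnormN v) vnormD. Qed.

Lemma vnorm_sum (I : Type) (r : seq I) (F : I -> 'rV[R]_n) :
  vnorm (\sum_(i <- r) F i) <= \sum_(i <- r) vnorm (F i).
Proof.
elim: r => [|i r IH]; first by rewrite !big_nil vnorm0.
by rewrite !big_cons; apply: le_trans (vnormD _ _) _; exact: lerD.
Qed.

Lemma normr_coord_le u (j : 'I_n) : `|u 0 j| <= vnorm u.
Proof.
rewrite -dot_delta; apply: le_trans (normr_dot_le _ _) _.
by rewrite /vnorm dot_delta mxE !eqxx sqrtr1 mul1r.
Qed.

Lemma linear_vnorm_le (f : 'rV[R]_n -> 'rV[R]_n) :
  (forall (a : R) x y, f (a *: x + y) = a *: f x + f y) ->
  forall x, vnorm (f x) <= (\sum_j vnorm (f (delta_mx 0 j))) * vnorm x.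
Proof.
move=> f_lin x.
have f0 : f 0 = 0.
  have := f_lin 1 0 0; rewrite !scale1r addr0 => f00.
  by apply: (addrI (f 0)); rewrite addr0 -f00.
have -> : f x = \sum_j x 0 j *: f (delta_mx 0 j).
  rewrite {1}(row_sum_delta x).
  by elim/big_rec2: _ => [|i y1 y2 _ <-] //; rewrite f_lin.
rewrite mulr_suml; apply: le_trans (vnorm_sum _ _) _.
apply: ler_sum => j _; rewrite vnormZ mulrC.
by apply: ler_wpM2l; [exact: vnorm_ge0 | exact: normr_coord_le].
Qed.

Lemma mulmx_vnorm_bounded M :
  exists2 c, 0 <= c & forall x, vnorm (x *m M) <= c * vnorm x.
Proof.
exists (\sum_j vnorm (delta_mx 0 j *m M)); first by apply: sumr_ge0 => j _; exact: vnorm_ge0.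
by apply: (linear_vnorm_le (f := mulmx^~ M)) => a y z; rewrite mulmxDl scalemxAl.
Qed.

End Dot.

Section Orthogonality.
Variables (R : realType) (n : nat).
Implicit Types (V M : 'M[R]_n) (x y : 'rV[R]_n).

Lemma orthspP V x : orthsp V x <-> forall y, (y <= V)%MS -> dot x y = 0.
Proof.
split=> [xV y /submxP [D ->] | x_dot]; first by rewrite /dot trmx_mul mulmxA xV mul0mx mxE.
apply/rowP => i; rewrite !mxE -[RHS](x_dot _ (row_sub i V)) dotE.
by apply: eq_bigr => j _; rewrite !mxE.
Qed.

Lemma orthsp_dot V x y : orthsp V x -> (y <= V)%MS -> dot x y = 0.
Proof. by move/orthspP; apply. Qed.

Lemma orthspD V x y : orthsp V x -> orthsp V y -> orthsp V (x + y).
Proof. by rewrite /orthsp mulmxDl => -> ->; rewrite addr0. Qed.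

Lemma orthspN V x : orthsp V x -> orthsp V (- x).
Proof. by rewrite /orthsp mulNmx => ->; rewrite oppr0. Qed.

Lemma orthspZ V (c : R) x : orthsp V x -> orthsp V (c *: x).
Proof. by rewrite /orthsp -scalemxAl => ->; rewrite scaler0. Qed.

Lemma orthspB V x y : orthsp V x -> orthsp V y -> orthsp V (x - y).
Proof. by move=> xV /orthspN; apply: orthspD. Qed.

Lemma unitmx_of_ker0 m (G : 'M[R]_m) : (forall w : 'rV[R]_m, w *m G = 0 -> w = 0) -> G \in unitmx.
Proof.
move=> G_inj; rewrite -row_free_unit -kermx_eq0; apply/negPn/negP => /rowV0Pn [v].
by move/sub_kermxP => /G_inj ->; rewrite eqxx.
Qed.

Lemma orth_proj_exists V :
  exists pi : 'M[R]_n, forall x, (x *m pi <= V)%MS /\ orthsp V (x - x *m pi).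
Proof.
move: (row_base V) (row_base_free V) (eq_row_base V) => B Bfree /eqmxP/andP [BV /submxP [D VD]].
have BBu : B *m B^T \in unitmx.
  apply: unitmx_of_ker0 => w wBB; apply/eqP.
  rewrite -(mulmx_free_eq0 _ Bfree); apply/eqP/dot_self_eq0.
  by rewrite /dot trmx_mul mulmxA -(mulmxA w) wBB mul0mx mxE.
exists (B^T *m invmx (B *m B^T) *m B) => x; split.
  by rewrite mulmxA (submx_trans (submxMl _ _) BV).
have piB : x *m (B^T *m invmx (B *m B^T) *m B) *m B^T = x *m B^T.
  by rewrite !mulmxA -[_ *m B *m B^T]mulmxA mulmxKV.
rewrite /orthsp (_ : V^T = (D *m B)^T); last by rewrite -VD.
by rewrite trmx_mul mulmxA mulmxBl piB subrr mul0mx.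
Qed.

Lemma posdef_unitmx M : posdef M -> M \in unitmx.
Proof.
move=> Mpos; apply: unitmx_of_ker0 => w wM; apply/eqP; apply: contraT => w0.
by have := Mpos w w0; rewrite wM mul0mx mxE ltxx.
Qed.

Lemma posdef_invmx M : M^T = M -> posdef M -> posdef (invmx M).
Proof.
move=> MT Mpos x x0; have Mu := posdef_unitmx Mpos.
have xM0 : x *m invmx M != 0.
  by move: x0; apply: contra => /eqP xM; apply/eqP; rewrite -(mulmxKV Mu x) xM mul0mx.
have := Mpos _ xM0; rewrite trmx_mul trmx_inv MT -!mulmxA mulKmx //.
Qed.

End Orthogonality.

Section LieBracket.
Variables (R : realType) (n : nat) (br : 'rV[R]_n -> 'rV[R]_n -> 'rV[R]_n).
Hypothesis br_lie : is_lie_bracket br.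
Implicit Types (x y z : 'rV[R]_n).

Lemma brlin (a : R) x y z : br (a *: x + y) z = a *: br x z + br y z.
Proof. by case: br_lie. Qed.

Lemma brC x y : br x y = - br y x.
Proof. by case: br_lie => _ []. Qed.

Lemma brDl x y z : br (x + y) z = br x z + br y z.
Proof. by have := brlin 1 x y z; rewrite !scale1r. Qed.

Lemma br0l z : br 0 z = 0.
Proof. by apply: (addrI (br 0 z)); rewrite -brDl !addr0. Qed.

Lemma brZl (a : R) x z : br (a *: x) z = a *: br x z.
Proof. by rewrite -(addr0 (a *: x)) brlin br0l addr0. Qed.

Lemma brNl x z : br (- x) z = - br x z.
Proof. by rewrite -scaleN1r brZl scaleN1r. Qed.

Lemma brBl x y z : br (x - y) z = br x z - br y z.
Proof. by rewrite brDl brNl. Qed.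

Lemma brDr x y z : br z (x + y) = br z x + br z y.
Proof. by rewrite brC brDl opprD -!brC. Qed.

Lemma brZr (a : R) x z : br z (a *: x) = a *: br z x.
Proof. by rewrite brC brZl -scalerN -brC. Qed.

Lemma brNr x z : br z (- x) = - br z x.
Proof. by rewrite -scaleN1r brZr scaleN1r. Qed.

Lemma brBr x y z : br z (x - y) = br z x - br z y.
Proof. by rewrite brDr brNr. Qed.

Lemma brxx x : br x x = 0.
Proof.
have : br x x + br x x = 0 by rewrite {1}brC addNr.
by rewrite -mulr2n -scaler_nat => /eqP; rewrite scaler_eq0 pnatr_eq0 /= => /eqP.
Qed.

Lemma br_vnorm_bounded :
  exists2 c, 0 <= c & forall x y, vnorm (br x y) <= c * vnorm x * vnorm y.
Proof.
exists (\sum_i \sum_j vnorm (br (delta_mx 0 i) (delta_mx 0 j))).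
  by apply: sumr_ge0 => i _; apply: sumr_ge0 => j _; exact: vnorm_ge0.
move=> x y; apply: le_trans (linear_vnorm_le (fun a u v => brlin a u v y) x) _.
rewrite mulrAC; apply: ler_wpM2r; first exact: vnorm_ge0.
rewrite mulr_suml; apply: ler_sum => i _.
by apply: linear_vnorm_le => a u v; rewrite brDr brZr.
Qed.

Hypothesis br_inv : ad_invariant br.

Lemma dot_brA x y z : dot (br x y) z = dot x (br y z).
Proof. exact: br_inv. Qed.

Lemma dot_brC x y z : dot (br x y) z = dot y (br z x).
Proof. by rewrite brC dotNl dot_brA -dotNr -brC. Qed.

Lemma dot_br_jacobi a b c d :
  dot (br a c) (br b d) - dot (br a d) (br b c) = dot (br a b) (br c d).
Proof.
rewrite !dot_brA -dotBr; congr (dot a _).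
case: br_lie => _ [_ /(_ c b d)].
rewrite (brC d c) brNr (brC c b) brNr => /eqP; rewrite addr_eq0 opprK subr_eq => /eqP ->.
by rewrite addrC addKr.
Qed.

End LieBracket.

Section LeviCivita.
Variables (R : realType) (n : nat) (br : 'rV[R]_n -> 'rV[R]_n -> 'rV[R]_n).
Hypotheses (br_lie : is_lie_bracket br) (br_inv : ad_invariant br).
Variable Q : 'M[R]_n.
Hypotheses (QT : Q^T = Q) (Qu : Q \in unitmx).
Implicit Types (U V W X Y : 'rV[R]_n).

Lemma levi_civitaE X Y : levi_civita Q br X Y =
  (1/2) *: (br X Y + (br Y (X *m Q) + br X (Y *m Q)) *m invmx Q).
Proof.
rewrite /levi_civita.
have -> : \row_j ((ipQ Q (br X Y) (delta_mx 0 j) - ipQ Q (br Y (delta_mx 0 j)) X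
            + ipQ Q (br (delta_mx 0 j) X) Y) / 2)
   = (1/2) *: (br X Y *m Q + br Y (X *m Q) + br X (Y *m Q)).
  apply/rowP => j; rewrite !mxE /ipQ -!/(dot _ _).
  rewrite [dot (br X Y *m Q) _]dotC dot_delta.
  rewrite dotMl QT (brC br_lie Y) dotNl dot_brA // dot_delta.
  rewrite dotMl QT dot_brA // dot_delta.
  by rewrite !mxE opprK mulrC mul1r.
by rewrite -scalemxAl !mulmxDl mulmxK // addrA.
Qed.

Lemma dot_levi_civita U W V : dot (levi_civita Q br U W *m Q) V =
  (1/2) * (dot (br U W) (V *m Q) + dot (br W (U *m Q)) V + dot (br U (W *m Q)) V).
Proof.
rewrite levi_civitaE -scalemxAl dotZl mulmxDl mulmxKV //.
by rewrite !dotDl dotMl QT addrA.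
Qed.

Lemma ipQ_curvE X Y :
  ipQ Q (curv Q br X Y Y) X =
    dot (br Y (Y *m Q) *m invmx Q) (br (X *m Q) X)
  + 1/4 * dot ((br Y (X *m Q) + br X (Y *m Q)) *m invmx Q) (br Y (X *m Q) + br X (Y *m Q))
  - 3/4 * dot (br X Y *m Q) (br X Y)
  - 1/2 * dot (br X Y) (br Y (X *m Q) - br X (Y *m Q)).
Proof.
set A := X *m Q; set B := Y *m Q; set Z := br X Y; set S := br Y A + br X B.
rewrite /ipQ -/(dot _ _) /curv !mulmxBl !dotBl !dot_levi_civita.
have nablaYY : levi_civita Q br Y Y = br Y B *m invmx Q.
  rewrite levi_civitaE brxx // add0r mulmxDl scalerDr -scalerDl.
  by rewrite (_ : 1/2 + 1/2 = 1 :> R) ?scale1r //; lra.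
have nablaXY : levi_civita Q br X Y = (1/2) *: (Z + S *m invmx Q) by rewrite levi_civitaE.
rewrite nablaYY mulmxKV // -/A (dot_brC br_lie br_inv X) (dot_brA br_inv (br Y B *m _)).
rewrite (dot_brC br_lie br_inv X (br Y B)) brxx // dot0r addr0.
rewrite nablaXY -/B -/Z (dot_brC br_lie br_inv Y) (dot_brA br_inv _ B) (dot_brC br_lie br_inv Y) -/Z.
rewrite (brC br_lie A Y) (brC br_lie B X) !dotNr.
rewrite (dot_brA br_inv Z) (dot_brC br_lie br_inv Y) -/Z (dot_brA br_inv Z B) (brC br_lie B X) dotNr.
rewrite -scalemxAl (mulmxDl Z (S *m _) Q) mulmxKV // !dotZl !dotDl.
rewrite (dotC (br Y A) Z) (dotC (br X B) Z) /S !mulmxDl !dotDl !dotDr ?dotNr.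
by field.
Qed.

End LeviCivita.

Section Deformation.
Variables (R : realType) (n : nat) (br : 'rV[R]_n -> 'rV[R]_n -> 'rV[R]_n).
Hypotheses (br_lie : is_lie_bracket br) (br_inv : ad_invariant br).
Variables (Psi : 'M[R]_n) (t : R).
Hypotheses (PsiT : Psi^T = Psi) (Pu : 1%:M - t *: Psi \in unitmx).
Local Notation P := (1%:M - t *: Psi).
Local Notation Q := (gt_mx Psi t).
Implicit Types (x y A B X Y : 'rV[R]_n).

Lemma dot_mulPsiC x y : dot (x *m Psi) y = dot (y *m Psi) x.
Proof. by rewrite dotMl PsiT dotC. Qed.

Lemma mulmx_deform x : x *m P = x - t *: (x *m Psi).
Proof. by rewrite mulmxBr mulmx1 -scalemxAr. Qed.

Lemma deform_mxT : P^T = P.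
Proof. by rewrite linearB /= linearZ /= trmx1 PsiT. Qed.

Lemma gt_mxT : Q^T = Q.
Proof. by rewrite /gt_mx trmx_inv deform_mxT. Qed.

Lemma posdef_gt_mx : posdef P -> posdef Q.
Proof. exact: posdef_invmx deform_mxT. Qed.

Lemma gt_mx_unit : Q \in unitmx.
Proof. by rewrite /gt_mx unitmx_inv. Qed.

Lemma mulmx_gt_mxK x : x *m Q *m P = x.
Proof. exact: mulmxKV. Qed.

Lemma mulmx_gt_mx x : x *m Q = x + t *: (x *m Psi) + t^+2 *: (x *m Psi *m Q *m Psi).
Proof.
have QP y : y *m Q = y + t *: (y *m Q *m Psi).
  by rewrite -{2}(mulmx_gt_mxK y) mulmx_deform subrK.
have PQ y : y *m Q = y + t *: (y *m Psi *m Q).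
  by rewrite -{2}(mulmxK Pu y) mulmx_deform mulmxBl -scalemxAl subrK.
by rewrite {1}PQ -addrA {1}QP scalerDr scalerA -expr2.
Qed.

Lemma dot_mulmx_gt_mx x : dot (x *m Q) x =
  dot x x + t * dot (x *m Psi) x + t^+2 * dot (x *m Psi *m Q) (x *m Psi).
Proof. by rewrite mulmx_gt_mx !dotDl !dotZl [in X in _ + X]dotMl PsiT. Qed.

Lemma ipQ_curv_gt_mxE X Y A B : X *m Q = A -> Y *m Q = B ->
  ipQ Q (curv Q br X Y Y) X =
  1/4 * dot (br A B) (br A B)
  - 3/2 * t^+2 * dot (br A B) (br (A *m Psi) (B *m Psi))
  + t^+3 * dot (br (A *m Psi) B + br A (B *m Psi)) (br (A *m Psi) (B *m Psi))
  - 3/4 * t^+4 * dot (br (A *m Psi) (B *m Psi)) (br (A *m Psi) (B *m Psi))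
  - 3/4 * t * dot (br X Y *m Psi) (br X Y)
  - 3/4 * t^+2 * dot (br X Y *m Psi *m Q) (br X Y *m Psi)
  - t^+3 * dot (br (B *m Psi) B *m Psi) (br A (A *m Psi))
  - 1/4 * t^+3 * dot ((br (A *m Psi) B - br A (B *m Psi)) *m Psi)
                      (br (A *m Psi) B - br A (B *m Psi)).
Proof.
move=> XA YB.
have XE : X = A - t *: (A *m Psi) by rewrite -mulmx_deform -XA mulmx_gt_mxK.
have YE : Y = B - t *: (B *m Psi) by rewrite -mulmx_deform -YB mulmx_gt_mxK.
have jacobi_swap al be :
    dot (br be B) (br A al) = dot (br al B) (br A be) - dot (br A B) (br al be).
  have := dot_br_jacobi br_lie br_inv A B al be.
  rewrite (brC br_lie be B) dotNl (brC br_lie B al) dotNr.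
  by rewrite [dot (br B be) _]dotC [dot (br A be) _]dotC; lra.
rewrite ipQ_curvE // ?gt_mxT ?gt_mx_unit // /gt_mx invmxK -/(gt_mx Psi t) XA YB.
rewrite dot_mulmx_gt_mx.
set ze := br X Y *m Psi; set zq := ze *m Q; clearbody zq ze.
rewrite !mulmx_deform XE YE.
rewrite !(brBl br_lie, brBr br_lie, brZl br_lie, brZr br_lie, brxx br_lie) ?scaler0 ?subr0 ?sub0r.
rewrite ?(mulmxBl, mulmxDl, mulNmx, =^~scalemxAl).
set al := A *m Psi; set be := B *m Psi.
rewrite (brC br_lie B A) (brC br_lie be A).
rewrite ?(dotDl, dotDr, dotBl, dotBr, dotNl, dotNr, dotZl, dotZr, mulNmx, mulmxBl, mulmxDl, =^~scalemxAl).
rewrite jacobi_swap.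
rewrite ?[dot (br A be) (br A B)]dotC ?[dot ((br A be) *m Psi) (br A B)]dot_mulPsiC.
rewrite ?[dot (br al B) (br A B)]dotC ?[dot ((br al B) *m Psi) (br A B)]dot_mulPsiC.
rewrite ?[dot (br al B) (br A be)]dotC ?[dot ((br al B) *m Psi) (br A be)]dot_mulPsiC.
rewrite ?[dot (br al be) (br A B)]dotC ?[dot ((br al be) *m Psi) (br A B)]dot_mulPsiC.
rewrite ?[dot (br al be) (br A be)]dotC ?[dot ((br al be) *m Psi) (br A be)]dot_mulPsiC.
rewrite ?[dot (br al be) (br al B)]dotC ?[dot ((br al be) *m Psi) (br al B)]dot_mulPsiC.
by field.
Qed.

End Deformation.

Definition curv_t3 {R : realType} {n : nat} (br : 'rV[R]_n -> 'rV[R]_n -> 'rV[R]_n)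
    (Psi : 'M[R]_n) (a b : 'rV[R]_n) : R :=
  dot (br (b *m Psi) b *m Psi) (br a (a *m Psi))
  + 1/4 * dot ((br (a *m Psi) b - br a (b *m Psi)) *m Psi) (br (a *m Psi) b - br a (b *m Psi)).

Definition br_PsiPsi {R : realType} {n : nat} (br : 'rV[R]_n -> 'rV[R]_n -> 'rV[R]_n)
    (Psi : 'M[R]_n) (a b : 'rV[R]_n) : 'rV[R]_n :=
  br (a *m Psi) (b *m Psi).

Definition br_Psi_sum {R : realType} {n : nat} (br : 'rV[R]_n -> 'rV[R]_n -> 'rV[R]_n)
    (Psi : 'M[R]_n) (a b : 'rV[R]_n) : 'rV[R]_n :=
  br (a *m Psi) b + br a (b *m Psi).

(* [X, Y] modulo the g0-orthogonal complement of k, for X = A (I - t Psi),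
   Y = B (I - t Psi) and a, b the k-components of A, B. *)
Definition br_gt {R : realType} {n : nat} (br : 'rV[R]_n -> 'rV[R]_n -> 'rV[R]_n)
    (Psi : 'M[R]_n) (t : R) (A B a b : 'rV[R]_n) : 'rV[R]_n :=
  br A B - t *: br_Psi_sum br Psi a b + t^+2 *: br_PsiPsi br Psi a b.

Section ReductionModK.
Variables (R : realType) (n : nat) (br : 'rV[R]_n -> 'rV[R]_n -> 'rV[R]_n).
Hypotheses (br_lie : is_lie_bracket br) (br_inv : ad_invariant br).
Variables (k Psi : 'M[R]_n).
Hypotheses (k_sub : subalgebra br k) (PsiT : Psi^T = Psi).
Hypothesis Psi_s : forall x, in_s k x -> x *m Psi = 0.
Implicit Types (a b c x y A B : 'rV[R]_n).

Lemma mulPsi_sub_k x : (x *m Psi <= k)%MS.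
Proof.
have [pi pi_k] := orth_proj_exists k.
set y := x *m Psi; have [ypi_k r_orth] := pi_k y; set r := y - y *m pi.
have yr : dot y r = 0 by rewrite /y dotMl PsiT Psi_s // dot0r.
have ypir : dot (y *m pi) r = 0 by rewrite dotC (orthsp_dot r_orth).
have /dot_self_eq0/eqP : dot r r = 0 by rewrite {1}/r dotBl yr ypir subrr.
by rewrite subr_eq0 => /eqP ->.
Qed.

Lemma orthsp_brl c x : (c <= k)%MS -> orthsp k x -> orthsp k (br c x).
Proof.
move=> ck xk; apply/orthspP => y yk.
by rewrite dot_brC // (orthsp_dot xk (k_sub yk ck)).
Qed.

Lemma orthsp_brr c x : (c <= k)%MS -> orthsp k x -> orthsp k (br x c).
Proof. by move=> ck xk; rewrite (brC br_lie); apply/orthspN/orthsp_brl. Qed.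

Lemma mulPsi_congr x y : orthsp k (x - y) -> x *m Psi = y *m Psi.
Proof. by move/Psi_s/eqP; rewrite mulmxBl subr_eq0 => /eqP. Qed.

Lemma dot_congr x y c : orthsp k (x - y) -> (c <= k)%MS -> dot x c = dot y c.
Proof. by move=> xy ck; apply/eqP; rewrite -subr_eq0 -dotBl (orthsp_dot xy ck). Qed.

Lemma dot_mulPsi_congr x y : orthsp k (x - y) -> dot (x *m Psi) x = dot (y *m Psi) y.
Proof.
by move=> xy; rewrite (mulPsi_congr xy) dotC (dot_congr xy (mulPsi_sub_k _)) dotC.
Qed.

Variable t : R.
Hypothesis Pu : 1%:M - t *: Psi \in unitmx.
Local Notation Q := (gt_mx Psi t).

Lemma ipQ_curv_modkE X Y A B a b : (a <= k)%MS -> (b <= k)%MS ->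
  orthsp k (A - a) -> orthsp k (B - b) -> X *m Q = A -> Y *m Q = B ->
  let Z := br_gt br Psi t A B a b in
  ipQ Q (curv Q br X Y Y) X =
    1/4 * dot (br A B) (br A B)
    - 3/2 * t^+2 * dot (br A B) (br_PsiPsi br Psi a b)
    + t^+3 * dot (br_Psi_sum br Psi a b) (br_PsiPsi br Psi a b)
    - 3/4 * t^+4 * dot (br_PsiPsi br Psi a b) (br_PsiPsi br Psi a b)
    - 3/4 * t * dot (Z *m Psi) Z
    - 3/4 * t^+2 * dot (Z *m Psi *m Q) (Z *m Psi)
    - t^+3 * curv_t3 br Psi a b.
Proof.
move=> ak bk Aa Bb XA YB Z.
rewrite (ipQ_curv_gt_mxE br_lie br_inv PsiT Pu XA YB).
rewrite /curv_t3 /br_PsiPsi /br_Psi_sum (mulPsi_congr Aa) (mulPsi_congr Bb).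
set al := a *m Psi; set be := b *m Psi.
have alk : (al <= k)%MS := mulPsi_sub_k a.
have bek : (be <= k)%MS := mulPsi_sub_k b.
set d := br al (B - b) + br (A - a) be.
have dk : orthsp k d by apply: orthspD; [apply: orthsp_brl | apply: orthsp_brr].
have v0_congr : orthsp k (br al B + br A be - (br al b + br a be)).
  rewrite (_ : _ - _ = d) // /d (brBr br_lie) (brBl br_lie).
  by apply/rowP => j; rewrite !mxE; ring.
have v1_congr : orthsp k (br al B - br A be - (br al b - br a be)).
  rewrite (_ : _ - _ = br al (B - b) - br (A - a) be).
    by apply: orthspB; [apply: orthsp_brl | apply: orthsp_brr].
  by rewrite (brBr br_lie) (brBl br_lie); apply/rowP => j; rewrite !mxE; ring.
have XY_congr : orthsp k (br X Y - Z).
  have XE : X = A - t *: al by rewrite /al -(mulPsi_congr Aa) -mulmx_deform -XA mulmx_gt_mxK.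
  have YE : Y = B - t *: be by rewrite /be -(mulPsi_congr Bb) -mulmx_deform -YB mulmx_gt_mxK.
  rewrite (_ : _ - _ = - (t *: d)); first exact/orthspN/orthspZ.
  rewrite /Z /br_gt /br_Psi_sum /br_PsiPsi -/al -/be XE YE /d.
  rewrite !(brBl br_lie, brBr br_lie, brZl br_lie, brZr br_lie).
  by apply/rowP => j; rewrite !mxE; ring.
rewrite (dot_congr v0_congr (k_sub alk bek)).
rewrite (mulPsi_congr (x := br be B) (y := br be b)); last by rewrite -(brBr br_lie); apply: orthsp_brl.
rewrite [dot (br be b *m Psi) _]dotC (dot_congr (x := br A al) (y := br a al)); first last.
- exact: mulPsi_sub_k.
- by rewrite -(brBl br_lie); apply: orthsp_brr.
rewrite [dot (br a al) _]dotC.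
rewrite (dot_mulPsi_congr v1_congr) (dot_mulPsi_congr XY_congr) (mulPsi_congr XY_congr).
ring.
Qed.

End ReductionModK.

Lemma wedge_norm_decomp {R : realType} {n : nat} (a b : 'rV[R]_n) :
  exists (l : R) (b' : 'rV[R]_n), b = b' + l *: a /\ vnorm a * vnorm b' = wedge_norm a b.
Proof.
have [a0|a_neq0] := eqVneq (dot a a) 0.
  exists 0, b; rewrite scale0r addr0 (dot_self_eq0 a0) vnorm0 mul0r; split=> //.
  by rewrite /wedge_norm !dot0l mul0r expr0n /= subr0 sqrtr0.
exists (dot a b / dot a a), (b - (dot a b / dot a a) *: a); split; first by rewrite subrK.
rewrite -sqrtrM ?dot_self_ge0 // /wedge_norm; congr Num.sqrt.
by rewrite dotBl !dotBr !dotZl !dotZr (dotC b a); field.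
Qed.

Section Bounds.
Variables (R : realType) (n : nat) (br : 'rV[R]_n -> 'rV[R]_n -> 'rV[R]_n).
Hypothesis br_lie : is_lie_bracket br.
Variables (Psi : 'M[R]_n) (Mb Mp : R).
Hypotheses (PsiT : Psi^T = Psi) (Mb_ge0 : 0 <= Mb) (Mp_ge0 : 0 <= Mp).
Hypothesis br_le : forall x y, vnorm (br x y) <= Mb * vnorm x * vnorm y.
Hypothesis mulPsi_le : forall x, vnorm (x *m Psi) <= Mp * vnorm x.
Implicit Types (a b x y : 'rV[R]_n).

Lemma normr_dot_mulPsi_le x y : `|dot (x *m Psi) y| <= Mp * vnorm x * vnorm y.
Proof.
apply: le_trans (normr_dot_le _ _) _; apply: ler_wpM2r; first exact: vnorm_ge0.
exact: mulPsi_le.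
Qed.

Lemma vnorm_br_mulPsil_le x y : vnorm (br (x *m Psi) y) <= Mb * Mp * (vnorm x * vnorm y).
Proof.
apply: le_trans (br_le _ _) _; rewrite -!mulrA; apply: ler_wpM2l => //.
by rewrite !mulrA; apply: ler_wpM2r; [exact: vnorm_ge0 | exact: mulPsi_le].
Qed.

Lemma vnorm_br_mulPsir_le x y : vnorm (br x (y *m Psi)) <= Mb * Mp * (vnorm x * vnorm y).
Proof.
apply: le_trans (br_le _ _) _; rewrite -!mulrA; apply: ler_wpM2l => //.
by rewrite mulrCA; apply: ler_wpM2l; [exact: vnorm_ge0 | exact: mulPsi_le].
Qed.

(* The three quantities below are unchanged under [b |-> b + l a], which reduces
   them to the case [b] orthogonal to [a], where [|a| |b| = |a /\ b|]. *)
Lemma vnorm_br_PsiPsi_le a b : vnorm (br_PsiPsi br Psi a b) <= Mb * Mp * Mp * wedge_norm a b.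
Proof.
have [l [b' [-> <-]]] := wedge_norm_decomp a b.
rewrite /br_PsiPsi mulmxDl -scalemxAl (brDr br_lie) (brZr br_lie) (brxx br_lie) scaler0 addr0.
apply: le_trans (br_le _ _) _; rewrite -!mulrA; apply: ler_wpM2l => //.
have := mulPsi_le a; have := mulPsi_le b'.
have := vnorm_ge0 (a *m Psi); have := vnorm_ge0 (b' *m Psi).
by have := vnorm_ge0 a; have := vnorm_ge0 b'; nra.
Qed.

Lemma vnorm_br_Psi_sum_le a b : vnorm (br_Psi_sum br Psi a b) <= 2 * Mb * Mp * wedge_norm a b.
Proof.
have [l [b' [-> <-]]] := wedge_norm_decomp a b.
rewrite /br_Psi_sum mulmxDl -scalemxAl !(brDr br_lie) !(brZr br_lie) (brC br_lie a (a *m Psi)).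
rewrite scalerN addrAC -!addrA addNr addr0.
apply: le_trans (vnormD _ _) _.
by have := vnorm_br_mulPsil_le a b'; have := vnorm_br_mulPsir_le a b'; lra.
Qed.

Lemma curv_t3_shift a b (l : R) : curv_t3 br Psi a (b + l *: a) = curv_t3 br Psi a b.
Proof.
rewrite /curv_t3 !(mulmxDl, =^~scalemxAl, brDl br_lie, brDr br_lie, brZl br_lie, brZr br_lie).
rewrite (brC br_lie a (a *m Psi)) (brC br_lie (b *m Psi) a).
rewrite ?(mulmxDl, mulmxBl, mulNmx, =^~scalemxAl).
rewrite ?(dotDl, dotDr, dotBl, dotBr, dotNl, dotNr, dotZl, dotZr).
set c := br (a *m Psi) a; set p := br (a *m Psi) b; set q := br a (b *m Psi).
rewrite ?[dot (c *m Psi) p](dot_mulPsiC PsiT) ?[dot (c *m Psi) q](dot_mulPsiC PsiT).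
rewrite ?[dot (q *m Psi) p](dot_mulPsiC PsiT).
by field.
Qed.

Lemma normr_curv_t3_le a b :
  `|curv_t3 br Psi a b| <= 2 * Mp * Mp * Mp * Mb * Mb * wedge_norm a b ^+ 2.
Proof.
have [l [b' [-> <-]]] := wedge_norm_decomp a b.
rewrite curv_t3_shift /curv_t3.
set u := br (a *m Psi) b' - br a (b' *m Psi).
have u_le : vnorm u <= 2 * (Mb * Mp * (vnorm a * vnorm b')).
  apply: le_trans (vnormB _ _) _.
  by have := vnorm_br_mulPsil_le a b'; have := vnorm_br_mulPsir_le a b'; lra.
have := normr_dot_mulPsi_le (br (b' *m Psi) b') (br a (a *m Psi)).
have := normr_dot_mulPsi_le u u.
have := vnorm_br_mulPsil_le b' b'; have := vnorm_br_mulPsir_le a a.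
have := vnorm_ge0 a; have := vnorm_ge0 b'; have := vnorm_ge0 u.
have := vnorm_ge0 (br (b' *m Psi) b'); have := vnorm_ge0 (br a (a *m Psi)).
set A := vnorm a; set B := vnorm b'; set U := vnorm u.
set E := vnorm (br (b' *m Psi) b'); set F := vnorm (br a (a *m Psi)).
set d1 := dot (br (b' *m Psi) b' *m Psi) (br a (a *m Psi)).
set d2 := dot (u *m Psi) u.
move=> F0 E0 U0 B0 A0 E_le F_le d2_le d1_le.
have EF : E * F <= (Mb * Mp * (B * B)) * (Mb * Mp * (A * A)) by apply: ler_pM.
have UU : U * U <= (2 * (Mb * Mp * (A * B))) * (2 * (Mb * Mp * (A * B))) by apply: ler_pM.
have d1_le' : `|d1| <= Mp * (Mb * Mp * (B * B)) * (Mb * Mp * (A * A)).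
  by apply: le_trans d1_le _; rewrite -mulrA -[X in _ <= X]mulrA; exact: ler_wpM2l.
have d2_le' : `|d2| <= Mp * ((2 * (Mb * Mp * (A * B))) * (2 * (Mb * Mp * (A * B)))).
  by apply: le_trans d2_le _; rewrite -mulrA; exact: ler_wpM2l.
apply: le_trans (ler_normD _ _) _.
rewrite normrM [`|1/4|]ger0_norm; last lra.
have -> : 2 * Mp * Mp * Mp * Mb * Mb * (A * B) ^+ 2 =
  Mp * (Mb * Mp * (B * B)) * (Mb * Mp * (A * A)) +
  1/4 * (Mp * ((2 * (Mb * Mp * (A * B))) * (2 * (Mb * Mp * (A * B))))) by field.
by apply: lerD => //; apply: ler_wpM2l => //; lra.
Qed.

End Bounds.

Lemma normr_expS_le {R : realType} (t x y : R) (m : nat) : 0 <= t -> t <= 1 -> `|x| <= y ->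
  `|t ^+ m.+1 * x| <= t * y.
Proof.
move=> t0 t1 xy; rewrite normrM ger0_norm ?exprn_ge0 // exprS -mulrA; apply: ler_wpM2l => //.
have := ler_pM (exprn_ge0 m t0) (normr_ge0 x) (exprn_ile1 m t0 t1) xy.
by rewrite mul1r.
Qed.

Section Estimate.
Variables (R : realType) (n : nat) (br : 'rV[R]_n -> 'rV[R]_n -> 'rV[R]_n).
Hypotheses (br_lie : is_lie_bracket br) (br_inv : ad_invariant br).
Variables (k Psi : 'M[R]_n).
Hypotheses (k_sub : subalgebra br k) (PsiT : Psi^T = Psi).
Hypothesis Psi_s : forall x, in_s k x -> x *m Psi = 0.
Variables (Mb Mp C : R).
Hypotheses (Mb_ge0 : 0 <= Mb) (Mp_ge0 : 0 <= Mp) (C_ge0 : 0 <= C).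
Hypothesis br_le : forall x y, vnorm (br x y) <= Mb * vnorm x * vnorm y.
Hypothesis mulPsi_le : forall x, vnorm (x *m Psi) <= Mp * vnorm x.

Let cw := Mb * Mp * Mp * C.
Let cv := 2 * Mb * Mp * C.
Let cZ := 1 + cv + cw.

Definition curv_err_const : R :=
  3/2 * cw + cv * cw + 3/4 * cw ^+ 2 + 3/4 * Mp * cZ ^+ 2 + 3/2 * Mp ^+ 2 * cZ ^+ 2
  + 2 * Mp * Mp * Mp * Mb * Mb * C ^+ 2.

Lemma curv_err_const_ge0 : 0 <= curv_err_const.
Proof.
have cw0 : 0 <= cw by rewrite !mulr_ge0.
have cv0 : 0 <= cv by rewrite !mulr_ge0.
by rewrite /curv_err_const !addr_ge0 ?mulr_ge0 ?exprn_ge0 ?addr_ge0 //; lra.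
Qed.

Section WedgeBounded.
Variables (A B a b : 'rV[R]_n).
Hypothesis wedge_le : wedge_norm a b <= C * vnorm (br A B).

Lemma vnorm_br_PsiPsi_le_br : vnorm (br_PsiPsi br Psi a b) <= cw * vnorm (br A B).
Proof.
apply: le_trans (vnorm_br_PsiPsi_le br_lie Mb_ge0 br_le mulPsi_le a b) _.
by rewrite /cw -!mulrA; do 3!apply: ler_wpM2l => //; rewrite ?mulr_ge0.
Qed.

Lemma vnorm_br_Psi_sum_le_br : vnorm (br_Psi_sum br Psi a b) <= cv * vnorm (br A B).
Proof.
apply: le_trans (vnorm_br_Psi_sum_le br_lie Mb_ge0 br_le mulPsi_le a b) _.
by rewrite /cv -!mulrA; do 3!apply: ler_wpM2l => //; rewrite ?mulr_ge0.
Qed.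

Lemma normr_curv_t3_le_br :
  `|curv_t3 br Psi a b| <= 2 * Mp * Mp * Mp * Mb * Mb * C ^+ 2 * vnorm (br A B) ^+ 2.
Proof.
apply: le_trans (normr_curv_t3_le br_lie PsiT Mb_ge0 Mp_ge0 br_le mulPsi_le a b) _.
rewrite -[X in _ <= X]mulrA -exprMn; apply: ler_wpM2l; first by rewrite !mulr_ge0.
by rewrite !expr2; apply: ler_pM => //; exact: sqrtr_ge0.
Qed.

Lemma vnorm_br_gt_le t : 0 <= t -> t <= 1 ->
  vnorm (br_gt br Psi t A B a b) <= cZ * vnorm (br A B).
Proof.
move=> t_ge0 t_le1; rewrite /br_gt.
apply: le_trans (vnormD _ _) _; apply: le_trans (lerD (vnormB _ _) (lexx _)) _.
rewrite !vnormZ ger0_norm // ger0_norm ?exprn_ge0 //.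
have := ler_pM t_ge0 (vnorm_ge0 _) t_le1 vnorm_br_Psi_sum_le_br.
have := ler_pM (exprn_ge0 2 t_ge0) (vnorm_ge0 _) (exprn_ile1 2 t_ge0 t_le1) vnorm_br_PsiPsi_le_br.
by rewrite /cZ !mulrDl mul1r; lra.
Qed.

End WedgeBounded.

Variable t : R.
Hypotheses (t_ge0 : 0 <= t) (t_le1 : t <= 1) (tMp_le : t * Mp <= 1/2).
Hypothesis Pu : 1%:M - t *: Psi \in unitmx.
Local Notation Q := (gt_mx Psi t).

Lemma vnorm_mulmx_gt_le y : vnorm (y *m Q) <= 2 * vnorm y.
Proof.
have yQE : y *m Q = y + t *: (y *m Q *m Psi).
  by rewrite -{2}(mulmx_gt_mxK Pu y) mulmx_deform subrK.
have : vnorm (y *m Q) <= vnorm y + t * (Mp * vnorm (y *m Q)).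
  rewrite {1}yQE; apply: le_trans (vnormD _ _) _; rewrite vnormZ ger0_norm //.
  by apply: lerD => //; apply: ler_wpM2l.
by have := ler_wpM2r (vnorm_ge0 (y *m Q)) tMp_le; rewrite mulrA; lra.
Qed.

Lemma ipQ_curv_modk_error X Y A B a b : (a <= k)%MS -> (b <= k)%MS ->
  orthsp k (A - a) -> orthsp k (B - b) -> X *m Q = A -> Y *m Q = B ->
  wedge_norm a b <= C * vnorm (br A B) ->
  `|ipQ Q (curv Q br X Y Y) X - 1/4 * vnorm (br A B) ^+ 2|
    <= t * curv_err_const * vnorm (br A B) ^+ 2.
Proof.
move=> ak bk Aa Bb XA YB wedge_le.
have w_le := vnorm_br_PsiPsi_le_br wedge_le.
have v_le := vnorm_br_Psi_sum_le_br wedge_le.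
have Z_le := vnorm_br_gt_le wedge_le t_ge0 t_le1.
have t3_le := normr_curv_t3_le_br wedge_le.
rewrite (ipQ_curv_modkE br_lie br_inv k_sub PsiT Psi_s Pu ak bk Aa Bb XA YB) /=.
move: w_le v_le Z_le t3_le.
set z := br A B; set w := br_PsiPsi br Psi a b; set v := br_Psi_sum br Psi a b.
set Z := br_gt br Psi t A B a b; set nz := vnorm z => w_le v_le Z_le t3_le.
rewrite -[dot z z]vnorm_sq -/nz.
have nz0 : 0 <= nz by exact: vnorm_ge0.
have e1 : `|dot z w| <= cw * nz ^+ 2.
  by apply: le_trans (normr_dot_le _ _) _; rewrite expr2 mulrCA; exact: ler_wpM2l.
have e2 : `|dot v w| <= cv * cw * nz ^+ 2.
  apply: le_trans (normr_dot_le _ _) _; rewrite expr2 mulrACA.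
  by apply: ler_pM => //; exact: vnorm_ge0.
have e3 : `|dot w w| <= cw ^+ 2 * nz ^+ 2.
  rewrite -vnorm_sq ger0_norm ?sqr_ge0 // -exprMn !expr2.
  by apply: ler_pM => //; exact: vnorm_ge0.
have Z2_le : vnorm Z ^+ 2 <= cZ ^+ 2 * nz ^+ 2.
  by rewrite -exprMn !expr2; apply: ler_pM => //; exact: vnorm_ge0.
have e4 : `|dot (Z *m Psi) Z| <= Mp * cZ ^+ 2 * nz ^+ 2.
  apply: le_trans (normr_dot_mulPsi_le mulPsi_le _ _) _.
  by rewrite -mulrA -expr2 -mulrA; exact: ler_wpM2l.
have e5 : `|dot (Z *m Psi *m Q) (Z *m Psi)| <= 2 * Mp ^+ 2 * cZ ^+ 2 * nz ^+ 2.
  apply: le_trans (normr_dot_le _ _) _.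
  have := vnorm_mulmx_gt_le (Z *m Psi); have := vnorm_ge0 (Z *m Psi *m Q).
  have : vnorm (Z *m Psi) ^+ 2 <= Mp ^+ 2 * vnorm Z ^+ 2.
    by rewrite -exprMn !expr2; apply: ler_pM; rewrite ?vnorm_ge0.
  have := ler_wpM2l (exprn_ge0 2 Mp_ge0) Z2_le; have := vnorm_ge0 (Z *m Psi).
  by nra.
have := normr_expS_le 1 t_ge0 t_le1 e1; have := normr_expS_le 2 t_ge0 t_le1 e2.
have := normr_expS_le 3 t_ge0 t_le1 e3; have := normr_expS_le 0 t_ge0 t_le1 e4.
have := normr_expS_le 1 t_ge0 t_le1 e5; have := normr_expS_le 2 t_ge0 t_le1 t3_le.
rewrite expr1 /curv_err_const.
set c1 := dot z w; set c2 := dot v w; set c3 := dot w w; set c4 := dot (Z *m Psi) Z.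
set c5 := dot (Z *m Psi *m Q) (Z *m Psi); set c6 := curv_t3 br Psi a b.
rewrite !ler_norml => /andP [? ?] /andP [? ?] /andP [? ?] /andP [? ?] /andP [? ?] /andP [? ?].
by apply/andP; split; lra.
Qed.

End Estimate.

Lemma sec_curv_ge0 {R : realType} {n : nat} (Q : 'M[R]_n)
    (br : 'rV[R]_n -> 'rV[R]_n -> 'rV[R]_n) (X Y : 'rV[R]_n) :
  Q^T = Q -> posdef Q -> 0 <= ipQ Q (curv Q br X Y Y) X -> 0 <= sec_curv Q br X Y.
Proof.
move=> QT Qpos num_ge0; apply: divr_ge0 => //.
by rewrite subr_ge0; exact: posdef_cauchy_schwarz.
Qed.

Lemma oproj_in_m_exists {R : realType} {n : nat} (h k : 'M[R]_n) (A : 'rV[R]_n) :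
  (h <= k)%MS -> in_p h A ->
  exists a, [/\ (a <= k)%MS, orthsp k (A - a) & is_oproj (in_m h k) A a].
Proof.
move=> /submxP [D ->] Ah; have [pi pi_k] := orth_proj_exists k; have [ak Aak] := pi_k A.
exists (A *m pi); split=> //; split=> [|z [zk _]]; last exact: orthsp_dot Aak zk.
split=> //; move: Ah; rewrite /in_p /orthsp trmx_mul -{1}(subrK (A *m pi) A) mulmxDl.
by rewrite mulmxA Aak mul0mx add0r.
Qed.

Lemma in_p_mulmx_gt {R : realType} {n : nat} (h Psi : 'M[R]_n) (t : R) (X : 'rV[R]_n) :
  Psi^T = Psi -> (forall x : 'rV[R]_n, (x <= h)%MS -> x *m Psi = 0) ->
  1%:M - t *: Psi \in unitmx -> in_p h X -> in_p h (X *m gt_mx Psi t).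
Proof.
move=> PsiT Psi_h Pu Xh; set A := X *m gt_mx Psi t.
have -> : A = X + t *: (A *m Psi) by rewrite -{1}(mulmx_gt_mxK Pu X) mulmx_deform subrK.
apply: orthspD => //; apply/orthspZ/orthspP => y yh.
by rewrite dotMl PsiT Psi_h // dot0r.
Qed.

Unset Implicit Arguments. Set Strict Implicit. Set Printing Implicit Defensive.

Theorem proposition4p1 (R : realType) (n : nat)
  (br : 'rV[R]_n -> 'rV[R]_n -> 'rV[R]_n) (h k : 'M[R]_n) (AdH : set 'M[R]_n)
  (Psi : 'M[R]_n) :
  is_lie_bracket br -> ad_invariant br ->
  subalgebra br h -> subalgebra br k -> (h <= k)%MS ->
  is_AdH br h k AdH ->
  (exists2 C : R, 0 < C & forall X Y Xm Ym : 'rV[R]_n,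
     in_p h X -> in_p h Y ->
     is_oproj (in_m h k) X Xm -> is_oproj (in_m h k) Y Ym ->
     wedge_norm Xm Ym <= C * vnorm (br X Y)) ->
  Psi^T = Psi ->
  (forall a, AdH a -> a *m Psi = Psi *m a) ->
  (forall x, in_s k x -> x *m Psi = 0) ->
  (forall x : 'rV[R]_n, (x <= h)%MS -> x *m Psi = 0) ->
  exists2 eps : R, 0 < eps & forall t : R, 0 <= t -> t < eps ->
    posdef (1%:M - t *: Psi) ->
    forall X Y : 'rV[R]_n, in_p h X -> in_p h Y -> row_free (col_mx X Y : 'M[R]_(2, n)) ->
      0 <= sec_curv (gt_mx Psi t) br X Y.
Proof.
(* Only the symmetry of Psi and its vanishing on s and h enter the estimate. *)
move=> br_lie br_inv _ k_sub hk _ [C C_gt0 wedge_le] PsiT _ Psi_s Psi_h.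
have [Mb Mb_ge0 br_le] := br_vnorm_bounded br_lie.
have [Mp Mp_ge0 mulPsi_le] := mulmx_vnorm_bounded Psi.
have K_ge0 := curv_err_const_ge0 Mb_ge0 Mp_ge0 (ltW C_gt0).
set K := curv_err_const Mb Mp C in K_ge0 *.
exists (1 / (4 * K + 2 * Mp + 1)); first by rewrite divr_gt0 //; lra.
move=> t t_ge0 t_lt Ppos X Y Xp Yp _.
have t_small : t * (4 * K + 2 * Mp + 1) < 1 by rewrite -ltr_pdivlMr //; lra.
have t_le1 : t <= 1 by nra.
have tMp_le : t * Mp <= 1/2 by nra.
have tK_le : 4 * (t * K) <= 1 by nra.
have Pu := posdef_unitmx Ppos.
set A := X *m gt_mx Psi t; set B := Y *m gt_mx Psi t.
have Ap : in_p h A := in_p_mulmx_gt PsiT Psi_h Pu Xp.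
have Bp : in_p h B := in_p_mulmx_gt PsiT Psi_h Pu Yp.
have [a [ak Aa a_proj]] := oproj_in_m_exists hk Ap.
have [b [bk Bb b_proj]] := oproj_in_m_exists hk Bp.
apply: sec_curv_ge0; [exact: gt_mxT | exact: posdef_gt_mx |].
have := ipQ_curv_modk_error br_lie br_inv k_sub PsiT Psi_s Mb_ge0 Mp_ge0
  br_le mulPsi_le t_ge0 t_le1 tMp_le Pu ak bk Aa Bb erefl erefl
  (wedge_le _ _ _ _ Ap Bp a_proj b_proj).
rewrite ler_norml => /andP [err_ge _].
by have := ler_wpM2r (sqr_ge0 (vnorm (br A B))) tK_le; rewrite /K; lra.
Qed.
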